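(* Let $q\ge 2$ be even and let $C\subseteq B_q^4$ be a code with $\rho(C)>2$ (i.e. $C$ is capable of correcting single deletions). Then $|C|\le \dfrac{q^2(q+2)}{4}$.
   Context: $B_q=\{0,1,\dots,q-1\}$, $B_q^n$ is the set of words of length $n$ over $B_q$. The deletion–insertion distance $\rho(x,y)$ is the minimum number of deletions and insertions of letters needed to transform $x$ into $y$; for a code $C$ with $|C|\ge2$, $\rho(C)$ is the minimum of $\rho(x,y)$ over distinct $x,y\in C$. For a word $x$, $\lfloor x\rfloor_1$ is the set of words obtained from $x$ by deleting one letter. A code $C\subseteq B_q^n$ is capable of correcting single deletions if the sets $\lfloor x\rfloor_1$ ($x\in C$) are pairwise disjoint; this is equivalent to $\rho(C)>2$. *)

From mathcomp Require Import all_boot.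
Set Implicit Arguments. Unset Strict Implicit. Unset Printing Implicit Defensive.

(* Words over B_q = {0,...,q-1} are sequences over 'I_q; B_q^n is n.-tuple 'I_q. *)

Definition del_at (T : Type) (i : nat) (x : seq T) : seq T :=
  take i x ++ drop i.+1 x.

Definition in_del1 (T : eqType) (x y : seq T) : bool :=
  has (fun i => del_at i x == y) (iota 0 (size x)).

(* C corrects single deletions: the sets floor(x)_1 (x in C) are pairwise
   disjoint (equivalently rho(C) > 2). *)
Definition corrects_single_deletion (q n : nat) (C : {set n.-tuple 'I_q}) : Prop :=
  forall x y : n.-tuple 'I_q, x \in C -> y \in C -> x != y ->
    forall z : seq 'I_q, ~~ (in_del1 (tval x) z && in_del1 (tval y) z).

(* Give each word z = (a, b, c) of length 3 the weight
   wt z = 1 + [a = b] + [b = c] + [a = b = c]; the total weight of B_q^3 is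
   q (q + 1)^2.  A case analysis shows that the distinct words obtained from
   any x in B_q^4 by one deletion carry total weight at least 4, plus one for
   each alternating word (a, b, a) with a <> b among them, except when x has
   the shape (a, b, c, a).  For a fixed letter a there are q - 1 alternating
   words with first letter a, an odd number since q is even, while a word of
   shape (a', b, c, a') yields either zero or two of them.  So if the balls of
   C cover all of them, some other word of C yields one of them as an extra;
   otherwise one of them is uncovered.  Either way each letter costs one unit
   of weight, and 4 |C| + q <= q (q + 1)^2 = q^2 (q + 2) + q. *)

From mathcomp Require Import all_boot zify.

Set Implicit Arguments.
Unset Strict Implicit.
Unset Printing Implicit Defensive.

Section Words3.

Variable T : eqType.

Definition dels4 (x0 x1 x2 x3 : T) : seq (T * T * T) :=
  [:: (x1, x2, x3); (x0, x2, x3); (x0, x1, x3); (x0, x1, x2)].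

Definition wt (z : T * T * T) : nat :=
  1 + (z.1.1 == z.1.2) + (z.1.2 == z.2) + ((z.1.1 == z.1.2) && (z.1.2 == z.2)).

Definition alt3 (z : T * T * T) : bool := (z.1.1 == z.2) && (z.1.1 != z.1.2).

Definition alt3_at (a : T) (z : T * T * T) : bool := alt3 z && (z.1.1 == a).

Definition abca (x0 x1 x2 x3 : T) : bool :=
  [&& x0 == x3, x0 != x1, x1 != x2 & x0 != x2].

Ltac case_eq_step := match goal with
  | H : ?a <> ?b |- context [?a == ?b] => rewrite (introF eqP H)
  | H : ?a <> ?b |- context [?b == ?a] => rewrite (introF eqP (nesym H))
  | |- context [?a == ?a] => rewrite eqxx
  | |- context [?a == ?b] => case: (a =P b) => [?|?]; [subst|]
  end.

Ltac case_eqs :=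
  rewrite /= ?inE ?xpair_eqE /=; repeat (case_eq_step; rewrite /= ?inE ?xpair_eqE /=).

Lemma wt_dels4_ge (x0 x1 x2 x3 : T) :
  4 + (~~ abca x0 x1 x2 x3) * count alt3 (undup (dels4 x0 x1 x2 x3))
  <= sumn (map wt (undup (dels4 x0 x1 x2 x3))).
Proof. by rewrite /abca /dels4 /wt /alt3; case_eqs. Qed.

Lemma abca_count_alt3_at_even (x0 x1 x2 x3 a : T) : abca x0 x1 x2 x3 ->
  ~~ odd (count (alt3_at a) (undup (dels4 x0 x1 x2 x3))).
Proof. by rewrite /abca /dels4 /alt3_at /alt3; case_eqs. Qed.

End Words3.

Arguments wt {T}.
Arguments alt3 {T}.
Arguments alt3_at {T}.

Section WeightCounting.

Variable T : finType.
Local Notation word3 := (T * T * T)%type.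

Lemma sum_andb_eq (b : bool) (c : T) : \sum_a (b && (c == a)) = b.
Proof.
rewrite (bigD1 c) //= eqxx andbT big1 ?addn0 // => a ne_ac.
by rewrite eq_sym (negbTE ne_ac) andbF.
Qed.

Lemma sum_word3 (F : word3 -> nat) :
  \sum_z F z = \sum_a \sum_b \sum_c F (a, b, c).
Proof.
transitivity (\sum_(p : T * T) \sum_c F (p, c)).
  by rewrite pair_bigA; apply: eq_bigr => -[p c].
by symmetry; rewrite pair_bigA; apply: eq_bigr => -[a b].
Qed.

Lemma sum_wt : \sum_(z : word3) wt z = #|T| * (#|T| + 1) ^ 2.
Proof.
have sum_const n : \sum_(a : T) n = #|T| * n by rewrite sum_nat_const.
have sum_eq (c : T) : \sum_a nat_of_bool (c == a) = 1 by apply: (sum_andb_eq true).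
rewrite sum_word3.
transitivity (\sum_(a : T) \sum_(b : T) (#|T| + 1 + (#|T| + 1) * (a == b))).
  apply: eq_bigr => a _; apply: eq_bigr => b _.
  rewrite /wt /= !big_split /= !sum_const sum_eq sum_andb_eq.
  by case: (a == b) => /=; lia.
transitivity (\sum_(a : T) (#|T| * (#|T| + 1) + (#|T| + 1))).
  by apply: eq_bigr => a _; rewrite big_split /= sum_const -big_distrr /= sum_eq muln1.
rewrite sum_const; lia.
Qed.

Lemma sum_alt3_at (a : T) : \sum_(z : word3) alt3_at a z = #|T|.-1.
Proof.
rewrite sum_word3.
transitivity (\sum_(a' : T) \sum_(b : T) nat_of_bool ((a' != b) && (a == a'))).
  apply: eq_bigr => a' _; apply: eq_bigr => b _.
  rewrite -(sum_andb_eq ((a' != b) && (a == a')) a'); apply: eq_bigr => c _.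
  by rewrite /alt3_at /alt3 /= [a == a']eq_sym; case: (a' == c); case: (a' == b); case: (a' == a).
rewrite exchange_big /=.
transitivity (\sum_(b : T) nat_of_bool (b != a)).
  apply: eq_bigr => b _; rewrite -(sum_andb_eq (b != a) a); apply: eq_bigr => a' _.
  by case: (a =P a') => [->|_]; rewrite ?andbT ?andbF // eq_sym.
rewrite -(cardC1 a) -sum1_card [RHS]big_mkcond /=.
by apply: eq_bigr => b _; rewrite !inE; case: (b != a).
Qed.

Lemma sum_wt_covered_uncovered_le (U : pred word3) :
  \sum_(z : word3) U z * wt z + \sum_(z : word3) (alt3 z && ~~ U z)
  <= \sum_(z : word3) wt z.
Proof.
rewrite -big_split; apply: leq_sum => z _.
by case: (U z); rewrite /= ?andbF ?andbT ?addn0 ?mul1n ?mul0n ?add0n ?leq_b1 // /wt; lia.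
Qed.

Lemma sumn_map_undup (F : word3 -> nat) (s : seq word3) :
  sumn (map F (undup s)) = \sum_z (z \in s) * F z.
Proof.
rewrite sumnE big_map big_uniq ?undup_uniq // big_mkcond; apply: eq_bigr => z _.
by rewrite mem_undup; case: (z \in s); rewrite ?mul1n ?mul0n.
Qed.

Lemma count_alt3_by_head (s : seq word3) :
  count alt3 s = \sum_a count (alt3_at a) s.
Proof.
elim: s => [|z s IH] /=; first by rewrite big1.
by rewrite big_split /= -IH sum_andb_eq.
Qed.

End WeightCounting.

Lemma even_sum (I : finType) (P : pred I) (F : I -> nat) :
  (forall i, P i -> ~~ odd (F i)) -> ~~ odd (\sum_(i | P i) F i).
Proof.
move=> F_even; apply: (big_ind (fun n => ~~ odd n)) => // m n.
by rewrite oddD => /negbTE-> /negbTE->.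
Qed.

Section SingleDeletionCode.

Variables (q : nat) (C : {set 4.-tuple 'I_q}).
Hypothesis C_corrects : corrects_single_deletion C.
Local Notation word3 := ('I_q * 'I_q * 'I_q)%type.

Definition seq_of3 (z : word3) : seq 'I_q := [:: z.1.1; z.1.2; z.2].

Lemma seq_of3_inj : injective seq_of3.
Proof. by move=> [[a b] c] [[a' b'] c'] [-> -> ->]. Qed.

Definition letter (x : 4.-tuple 'I_q) (i : nat) : 'I_q := tnth x (inord i).

Definition tdels (x : 4.-tuple 'I_q) : seq word3 :=
  dels4 (letter x 0) (letter x 1) (letter x 2) (letter x 3).

Definition tabca (x : 4.-tuple 'I_q) : bool :=
  abca (letter x 0) (letter x 1) (letter x 2) (letter x 3).

Lemma in_del1_seq_of3 (x : 4.-tuple 'I_q) (z : word3) :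
  in_del1 x (seq_of3 z) = (z \in tdels x).
Proof.
rewrite /in_del1 -[RHS](mem_map seq_of3_inj) -has_pred1 has_map.
case: x => [[|x0 [|x1 [|x2 [|x3 [|? ?]]]]] //= size_x].
by rewrite /tdels /letter !(tnth_nth x0) /= !inordK.
Qed.

Lemma tdels_disjoint (x y : 4.-tuple 'I_q) (z : word3) :
  x \in C -> y \in C -> x != y -> z \in tdels x -> (z \in tdels y) = false.
Proof.
move=> xC yC ne_xy zx; apply/negbTE.
by have := C_corrects xC yC ne_xy (seq_of3 z); rewrite !in_del1_seq_of3 zx.
Qed.

Definition covered (z : word3) : bool := [exists x in C, z \in tdels x].

Lemma sum_mem_tdels (z : word3) :
  \sum_(x in C) (z \in tdels x) = covered z.
Proof.
rewrite /covered; case: existsP => [[x /andP[xC zx]]|not_cov].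
  rewrite (bigD1 x) //= zx big1 // => y /andP[yC ne_yx].
  by rewrite (tdels_disjoint xC yC) // eq_sym.
rewrite big1 // => x xC; case zx: (z \in tdels x) => //.
by case: not_cov; exists x; rewrite xC zx.
Qed.

Definition extra (a : 'I_q) (x : 4.-tuple 'I_q) : nat :=
  (~~ tabca x) * count (alt3_at a) (undup (tdels x)).

Lemma weight_of_code :
  4 * #|C| + \sum_a \sum_(x in C) extra a x <= \sum_z covered z * wt z.
Proof.
rewrite exchange_big /= mulnC -sum_nat_const -big_split /=.
apply: (@leq_trans (\sum_(x in C) \sum_z (z \in tdels x) * wt z)).
  apply: leq_sum => x _; rewrite -big_distrr -count_alt3_by_head -sumn_map_undup.
  exact: wt_dels4_ge.
rewrite exchange_big /=; apply: leq_sum => z _.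
by rewrite -big_distrl /= sum_mem_tdels.
Qed.

Lemma alt3_at_loss (a : 'I_q) : 0 < q -> ~~ odd q ->
  0 < \sum_z (alt3_at a z && ~~ covered z) + \sum_(x in C) extra a x.
Proof.
move=> q_gt0 q_even.
case: (posnP (\sum_z (alt3_at a z && ~~ covered z))) => [no_loss|]; last first.
  by move/leq_trans; apply; apply: leq_addr.
rewrite no_loss add0n.
have alt3_covered z : alt3_at a z -> covered z.
  move=> za; case cov: (covered z) => //.
  by move/eqP: no_loss; rewrite sum_nat_eq0 => /forallP/(_ z); rewrite za cov.
pose c x := count (alt3_at a) (undup (tdels x)).
have sum_c : \sum_(x in C) c x = q.-1.
  rewrite -[q in q.-1]card_ord -(sum_alt3_at a).
  transitivity (\sum_(x in C) \sum_z (z \in tdels x) * alt3_at a z).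
    by apply: eq_bigr => x _; rewrite /c -sumn_count sumn_map_undup.
  rewrite exchange_big; apply: eq_bigr => z _; rewrite -big_distrl /= sum_mem_tdels.
  by case za: (alt3_at a z); rewrite ?(alt3_covered z za) ?muln0.
have split_c : \sum_(x in C) c x = \sum_(x in C) tabca x * c x + \sum_(x in C) extra a x.
  rewrite -big_split; apply: eq_bigr => x _; rewrite /extra.
  by case: (tabca x); rewrite /= ?mul0n ?mul1n ?addn0 ?add0n.
have abca_even : ~~ odd (\sum_(x in C) tabca x * c x).
  apply: even_sum => x _; case x_abca: (tabca x); last by rewrite mul0n.
  by rewrite mul1n; apply: abca_count_alt3_at_even.
have : odd q.-1 by rewrite -subn1 oddB // (negbTE q_even).
by rewrite -sum_c split_c oddD (negbTE abca_even) /=; apply: odd_gt0.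
Qed.

Lemma alt3_loss : 0 < q -> ~~ odd q ->
  q <= \sum_z (alt3 z && ~~ covered z) + \sum_a \sum_(x in C) extra a x.
Proof.
move=> q_gt0 q_even.
rewrite [\sum_z _](eq_bigr _ (fun z _ => esym (sum_andb_eq _ z.1.1))) exchange_big /=.
rewrite -big_split /= -[q in q <= _]card_ord -sum1_card; apply: leq_sum => a _.
apply: leq_trans (alt3_at_loss a q_gt0 q_even) _.
by rewrite leq_add2r; apply/eq_leq/eq_bigr => z _; rewrite /alt3_at andbAC.
Qed.

End SingleDeletionCode.

Lemma weight_budget_bound (q c e s m : nat) :
  4 * c + e <= s -> s + m <= q * (q + 1) ^ 2 -> q <= m + e ->
  4 * c <= q ^ 2 * (q + 2).
Proof. nia. Qed.

Theorem theorem2p1 (q : nat) (C : {set 4.-tuple 'I_q}) :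
  2 <= q -> ~~ odd q -> corrects_single_deletion C ->
  4 * #|C| <= q ^ 2 * (q + 2).
Proof.
move=> q_ge2 q_even C_corrects.
have code_weight := weight_of_code C_corrects.
have := sum_wt_covered_uncovered_le (covered C).
rewrite sum_wt card_ord => total_weight.
have loss := alt3_loss C_corrects (ltnW q_ge2) q_even.
exact: weight_budget_bound code_weight total_weight loss.
Qed.
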